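(* Let $q \ge 2$ and $n > 1$ be integers, let $\Sigma = \{0,1,\dots,q-1\}$, and let $m = 2^n - 1$. Then the truth table $T_n(L_q^m)$ is a binary (i.e. $2$-ary) $Z_{n+1}$ instance.
   Context: Zimin words are defined recursively over an alphabet of variables $x_1, x_2, \dots$ by $Z_1 = x_1$ and $Z_{k+1} = Z_k\, x_{k+1}\, Z_k$; thus $Z_k$ has length $2^k-1$ (e.g. $Z_2 = x_1x_2x_1$, $Z_3 = x_1x_2x_1x_3x_1x_2x_1$). A word $W$ over an alphabet $A$ is an instance of a word $V$ (a ''$V$ instance'') if there is a non-erasing monoid homomorphism $\phi$ from words over the letters of $V$ to $A^+$ (every letter is sent to a nonempty word over $A$) with $\phi(V) = W$. $L_q^m$ denotes the sequence of all $q^m$ words of length $m$ over $\Sigma$ listed in lexicographic order (with $0<1<\dots<q-1$; equivalently, ordered by their value as base-$q$ numerals). The truth table $T_n(L_q^m) = t_1 t_2 \cdots t_{q^m}$ is the word of length $q^m$ over $\{0,1\}$ such that $t_i = 1$ if and only if the $i$-th word of $L_q^m$ is a $Z_n$ instance. For example, for $q=2$, $n=2$, $m=3$ one has $T_2(L_2^3) = 10100101$. *)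

From Stdlib Require Import ClassicalDescription.
From mathcomp Require Import all_boot.
Set Implicit Arguments. Unset Strict Implicit. Unset Printing Implicit Defensive.

(* Words are sequences of natural numbers (letters).  Variables x_i are
   encoded as the natural number i. *)

(* Zimin words: zimin 1 = [:: 1], zimin k.+1 = zimin k ++ [:: k.+1] ++ zimin k.
   (zimin 0 = [::] is an auxiliary base case, never used in the statement.) *)
Fixpoint zimin (k : nat) : seq nat :=
  if k is k'.+1 then zimin k' ++ k'.+1 :: zimin k' else [::].

Definition is_instance (V W : seq nat) : Prop :=
  exists phi : nat -> seq nat,
    (forall x, x \in V -> phi x != [::]) /\ flatten (map phi V) = W.

(* The i-th (0-based) word of length m over {0,...,q-1} in lexicographic
   order: the base-q representation of i with m digits, most significant first. *)
Definition lex_word (q m i : nat) : seq nat :=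
  [seq (i %/ q ^ (m - j.+1)) %% q | j <- iota 0 m].

Definition lex_list (q m : nat) : seq (seq nat) :=
  [seq lex_word q m i | i <- iota 0 (q ^ m)].

Definition indic (P : Prop) : nat :=
  if excluded_middle_informative P then 1 else 0.

Definition truth_table (n q m : nat) : seq nat :=
  [seq indic (is_instance (zimin n) w) | w <- lex_list q m].

Definition binary_word (W : seq nat) : bool := all (fun a => a < 2) W.

From Stdlib Require Import ClassicalDescription.
From mathcomp Require Import all_boot zify.

(* A word of length 2^n - 1 is an instance of Z_n only if every variable is sent to a
   single letter, so the i-th word of L_q^m is a Z_n instance iff i = sum_j c_j s_j with
   digits c_j < q, where s_j is the base-q number with a digit 1 exactly at the positions
   of x_j in Z_n.  These weights satisfy (q - 1) (s_(k+1) + ... + s_n) < s_k, so on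
   [0, L_k) with L_k = 1 + (q - 1) (s_(k+1) + ... + s_n) adding (q - 1) s_k preserves
   representability.  Hence the prefix of length L_(k-1) = (q - 1) s_k + L_k of the truth
   table has the shape X Y X, where X is its prefix of length L_k and Y is nonempty.
   Descending from L_n = 1 to L_0 = q^m builds a Z_(n+1) instance. *)

Lemma eq_indic (P Q : Prop) : (P <-> Q) -> indic P = indic Q.
Proof.
rewrite /indic => PQ.
case: excluded_middle_informative => hP; case: excluded_middle_informative => hQ //.
- by case: hQ; apply/PQ.
- by case: hP; apply/PQ.
Qed.

Lemma indic_lt2 (P : Prop) : indic P < 2.
Proof. by rewrite /indic; case: excluded_middle_informative. Qed.

Fixpoint nat_of_digits (q : nat) (w : seq nat) : nat :=
  if w is d :: w' then d * q ^ size w' + nat_of_digits q w' else 0.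

Lemma nat_of_digits_cat q a b :
  nat_of_digits q (a ++ b) = nat_of_digits q a * q ^ size b + nat_of_digits q b.
Proof. by elim: a => [|d a IHa] //=; rewrite IHa size_cat expnD; lia. Qed.

Lemma nat_of_digits_lt q w :
  all (fun d => d < q) w -> nat_of_digits q w < q ^ size w.
Proof.
elim: w => [|d w IHw] //= /andP[ltdq /IHw ltwq].
rewrite expnS; nia.
Qed.

Lemma size_lex_word q m i : size (lex_word q m i) = m.
Proof. by rewrite size_map size_iota. Qed.

Lemma lex_wordS q m i : lex_word q m.+1 i = (i %/ q ^ m) %% q :: lex_word q m i.
Proof.
rewrite /lex_word /= subn1 -(addn0 1) iotaDl -map_comp.
by congr (_ :: _); apply: eq_map => j /=; rewrite add1n subSS.
Qed.

Lemma lex_wordMDl q m x i : 0 < q -> lex_word q m (x * q ^ m + i) = lex_word q m i.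
Proof.
move=> q_gt0; apply/eq_in_map => j; rewrite mem_iota add0n => /andP[_ ltjm].
have -> : x * q ^ m = (x * q ^ j * q) * q ^ (m - j.+1).
  by rewrite -!mulnA -!expnS -expnD; congr (_ * _ ^ _); lia.
by rewrite divnMDl ?expn_gt0 ?q_gt0 // modnMDl.
Qed.

Lemma lex_word_digits q w :
  0 < q -> all (fun d => d < q) w -> lex_word q (size w) (nat_of_digits q w) = w.
Proof.
move=> q_gt0; elim: w => [|d w IHw] //= /andP[ltdq ltwq].
rewrite lex_wordS lex_wordMDl // IHw //.
by rewrite divnMDl ?expn_gt0 ?q_gt0 // divn_small ?nat_of_digits_lt // addn0 modn_small.
Qed.

Lemma nat_of_digits_lex_word q m i :
  0 < q -> nat_of_digits q (lex_word q m i) = i %% q ^ m.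
Proof.
move=> q_gt0; elim: m => [|m IHm]; first by rewrite modn1.
rewrite lex_wordS /= IHm size_lex_word.
set a := i %/ q ^ m; set r := i %% q ^ m.
have ltr : r < q ^ m by rewrite ltn_pmod ?expn_gt0 ?q_gt0.
have ltd : a %% q < q by rewrite ltn_pmod.
have -> : i = a %/ q * q ^ m.+1 + (a %% q * q ^ m + r).
  by rewrite {1}(divn_eq i (q ^ m)) -/a -/r {1}(divn_eq a q) expnS; nia.
by rewrite modnMDl; apply/esym/modn_small; rewrite expnS; nia.
Qed.

Lemma size_flatten_map_nonempty (phi : nat -> seq nat) (V : seq nat) :
  (forall x, x \in V -> phi x != [::]) -> size V <= size (flatten (map phi V)).
Proof.
elim: V => [|x V IHV] //= phiV_ne.
rewrite size_cat -add1n leq_add ?IHV // => [|y Vy].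
  by rewrite lt0n size_eq0 phiV_ne ?mem_head.
by rewrite phiV_ne // inE Vy orbT.
Qed.

Lemma flatten_map_singletons (phi : nat -> seq nat) (V : seq nat) :
  (forall x, x \in V -> phi x != [::]) -> size (flatten (map phi V)) = size V ->
  flatten (map phi V) = map (fun x => head 0 (phi x)) V.
Proof.
elim: V => [|x V IHV] //= phiV_ne; rewrite size_cat.
have phiV'_ne y : y \in V -> phi y != [::] by move=> Vy; rewrite phiV_ne // inE Vy orbT.
have := @size_flatten_map_nonempty _ _ phiV'_ne.
have : 0 < size (phi x) by rewrite lt0n size_eq0 phiV_ne ?mem_head.
case: (phi x) => [|a [|b w]] // _ leVphi; rewrite [size _]/= ?add1n ?addSn => -[size_eq].
  by rewrite /= IHV.
by move: leVphi size_eq; lia.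
Qed.

Lemma is_instance_same_size V W :
  size W = size V -> is_instance V W <-> exists c : nat -> nat, W = map c V.
Proof.
move=> size_WV; split => [[phi [phiV_ne eqW]]|[c ->]].
  exists (fun x => head 0 (phi x)).
  by rewrite -eqW flatten_map_singletons // eqW.
by exists (fun x => [:: c x]); rewrite flatten_map1.
Qed.

Lemma size_zimin k : size (zimin k) = 2 ^ k - 1.
Proof.
elim: k => [|k IHk] //=; rewrite size_cat /= IHk expnS.
by have := expn_gt0 2 k; lia.
Qed.

Lemma mem_zimin_leq k x : x \in zimin k -> x <= k.
Proof.
elim: k => [|k IHk] //=.
by rewrite mem_cat inE => /or3P[/IHk|/eqP->|/IHk]; lia.
Qed.

Lemma is_instance_ziminS k X Y :
  is_instance (zimin k) X -> Y != [::] -> is_instance (zimin k.+1) (X ++ Y ++ X).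
Proof.
move=> [phi [phi_ne <-]] Y_ne.
pose psi (x : nat) : seq nat := if x == k.+1 then Y else phi x.
have psi_phi : {in zimin k, psi =1 phi}.
  by move=> x /mem_zimin_leq lexk; rewrite /psi ifN //; lia.
exists psi; split => [x|].
  rewrite /= mem_cat inE orbCA orbb => /orP[/eqP->|xZ]; first by rewrite /psi eqxx.
  by rewrite psi_phi // phi_ne.
rewrite /= map_cat /=; have /eq_in_map-> := psi_phi.
by rewrite flatten_cat /= /psi eqxx.
Qed.

Lemma is_instance_zimin_period k (t : nat -> nat) L D :
  L < D -> (forall x, x < L -> t (D + x) = t x) ->
  is_instance (zimin k) (map t (iota 0 L)) ->
  is_instance (zimin k.+1) (map t (iota 0 (D + L))).
Proof.
move=> ltLD t_periodic inst_L.
have -> : D + L = L + (D - L) + L by lia.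
rewrite !iotaD !map_cat -catA add0n (_ : L + (D - L) = D + 0); last by lia.
rewrite (iotaDl D 0 L) -map_comp.
have /eq_in_map-> : {in iota 0 L, t \o addn D =1 t}.
  by move=> x; rewrite mem_iota add0n => /andP[_ /t_periodic].
by apply: is_instance_ziminS; rewrite // -size_eq0 size_map size_iota; lia.
Qed.

Lemma is_instance_lex_word (V : seq nat) q i :
  0 < q -> i < q ^ size V ->
  is_instance V (lex_word q (size V) i) <->
  exists2 c : nat -> nat, (forall x, c x < q) & i = nat_of_digits q (map c V).
Proof.
move=> q_gt0 lti; rewrite is_instance_same_size ?size_lex_word //.
split=> [[c lexV]|[c ltcq ->]].
  exists (fun x => c x %% q) => [x|]; first by rewrite ltn_pmod.
  have -> : map (fun x => c x %% q) V = lex_word q (size V) i.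
    by rewrite (map_comp (modn^~ q) c) -lexV -map_comp; apply: eq_map => j /=; rewrite modn_mod.
  by rewrite nat_of_digits_lex_word // modn_small.
exists c; rewrite -[in size V](size_map c) lex_word_digits //.
by apply/allP => _ /mapP[x _ ->].
Qed.

Section SuperincreasingWeights.

Variables (q n : nat) (s : nat -> nat).
Hypothesis q_gt0 : 0 < q.

Definition weighted_sum (c : nat -> nat) : nat := \sum_(1 <= j < n.+1) c j * s j.

Definition tail_weight (k : nat) : nat := \sum_(k.+1 <= j < n.+1) s j.

Definition representable (x : nat) : Prop :=
  exists2 c : nat -> nat, (forall j, c j < q) & x = weighted_sum c.

Lemma weighted_sum_update c k v : 1 <= k <= n ->
  weighted_sum (fun j => if j == k then v else c j) + c k * s k =
  weighted_sum c + v * s k.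
Proof.
move=> /andP[k_gt0 lekn].
rewrite /weighted_sum !(@big_cat_nat _ _ _ k 1 n.+1) ?leqW //=.
rewrite !(@big_ltn _ _ _ k n.+1) // eqxx.
have eq_low : \sum_(1 <= j < k) (if j == k then v else c j) * s j =
              \sum_(1 <= j < k) c j * s j.
  by apply: eq_big_nat => j /andP[_ ltjk]; rewrite ifN // neq_ltn ltjk.
have eq_high : \sum_(k.+1 <= j < n.+1) (if j == k then v else c j) * s j =
               \sum_(k.+1 <= j < n.+1) c j * s j.
  by apply: eq_big_nat => j /andP[ltkj _]; rewrite ifN // neq_ltn ltkj orbT.
rewrite eq_low eq_high; lia.
Qed.

Lemma tail_weight_nn : tail_weight n = 0.
Proof. by rewrite /tail_weight big_geq. Qed.

Lemma tail_weight_pred k : 1 <= k <= n -> tail_weight k.-1 = s k + tail_weight k.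
Proof. by move=> /andP[k_gt0 lekn]; rewrite /tail_weight prednK // big_ltn. Qed.

Lemma leq_tail_weight j i : j <= i -> i <= n -> tail_weight i <= tail_weight j.
Proof.
by move=> leji lein; rewrite /tail_weight (@big_cat_nat _ _ _ i.+1 j.+1 n.+1) //= leq_addl.
Qed.

Lemma leq_weighted_sum c j : 1 <= j <= n -> c j * s j <= weighted_sum c.
Proof.
move=> j_range; rewrite /weighted_sum (bigD1_seq j) ?iota_uniq //= ?leq_addr //.
by rewrite mem_index_iota ltnS.
Qed.

Lemma weighted_sum_le_tail c k :
  (forall j, c j < q) -> (forall j, 1 <= j <= k -> c j = 0) -> k <= n ->
  weighted_sum c <= (q - 1) * tail_weight k.
Proof.
move=> ltcq c_low lekn.
rewrite /weighted_sum (@big_cat_nat _ _ _ k.+1) //= big1_seq ?add0n; last first.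
  by move=> j /andP[_]; rewrite mem_index_iota ltnS => /c_low->.
rewrite /tail_weight big_distrr leq_sum // => j _.
by rewrite leq_mul2r; have := ltcq j; lia.
Qed.

Hypothesis weight_gap : forall k, 1 <= k <= n -> (q - 1) * tail_weight k < s k.

Lemma small_weighted_sum_eq0 c i j :
  weighted_sum c <= (q - 1) * tail_weight i -> 1 <= j <= i -> i <= n -> c j = 0.
Proof.
move=> small /andP[j_gt0 leji] lein; apply/eqP; rewrite -leqn0 leqNgt; apply/negP => cj_gt0.
have j_range : 1 <= j <= n by rewrite j_gt0 (leq_trans leji).
have := weight_gap _ j_range; have := leq_weighted_sum c j j_range.
have : (q - 1) * tail_weight i <= (q - 1) * tail_weight j.
  by rewrite leq_mul2l leq_tail_weight ?orbT.
have : s j <= c j * s j by rewrite leq_pmull.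
move: small; lia.
Qed.

Lemma representable_add_top k x : 1 <= k <= n -> x <= (q - 1) * tail_weight k ->
  representable x -> representable (x + (q - 1) * s k).
Proof.
move=> k_range lex [c ltcq x_def].
have ck0 : c k = 0.
  case/andP: k_range => k_gt0 lekn.
  by apply: (@small_weighted_sum_eq0 c k k); rewrite -?x_def ?k_gt0 ?leqnn.
exists (fun j : nat => if j == k then q - 1 else c j) => [j|].
  by case: eqP; rewrite ?subn1 ?ltn_predL.
by have := weighted_sum_update c k (q - 1) k_range; rewrite ck0; lia.
Qed.

Lemma representable_sub_top k x : 1 <= k <= n -> x <= (q - 1) * tail_weight k ->
  representable (x + (q - 1) * s k) -> representable x.
Proof.
move=> /[dup] k_range /andP[k_gt0 lekn] lex [c ltcq sum_c].
have c_low j : 1 <= j < k -> c j = 0.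
  move=> /andP[j_gt0 ltjk]; apply: (@small_weighted_sum_eq0 c k.-1).
  - by rewrite tail_weight_pred // -sum_c; lia.
  - by rewrite j_gt0 -ltnS prednK.
  - by lia.
set c0 := fun j : nat => if j == k then 0 else c j.
have c0_small : weighted_sum c0 <= (q - 1) * tail_weight k.
  apply: weighted_sum_le_tail => // j; rewrite /c0; first by case: eqP.
  by case/andP=> j_gt0; rewrite leq_eqVlt; case: eqP => // _ ltjk; rewrite c_low ?j_gt0.
have := weighted_sum_update c k 0 k_range; rewrite -/c0 -sum_c => c0_def.
have ck : c k = q - 1.
  case: (ltnP (c k) (q - 1)) => [ltck|]; last by have := ltcq k; lia.
  have : (c k).+1 * s k <= (q - 1) * s k by rewrite leq_mul2r ltck orbT.
  by have := weight_gap _ k_range; rewrite mulSn; lia.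
by exists c0 => [j|]; [rewrite /c0; case: eqP | move: c0_def; rewrite ck; lia].
Qed.

Lemma representable_shift k x : 1 <= k <= n -> x <= (q - 1) * tail_weight k ->
  representable x <-> representable (x + (q - 1) * s k).
Proof.
by move=> k_range lex; split; [apply: representable_add_top | apply: representable_sub_top].
Qed.

Lemma is_instance_zimin_representable j :
  (forall k, 1 <= k <= n -> 1 + (q - 1) * tail_weight k < (q - 1) * s k) ->
  j <= n ->
  is_instance (zimin j.+1)
    [seq indic (representable i) | i <- iota 0 (1 + (q - 1) * tail_weight (n - j))].
Proof.
move=> block_gap; elim: j => [|j IHj] lejn.
  rewrite subn0 tail_weight_nn muln0.
  by exists (fun=> [:: indic (representable 0)]).
have k_range : 1 <= n - j <= n by lia.
rewrite (_ : n - j.+1 = (n - j).-1); last by lia.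
rewrite tail_weight_pred // mulnDr addnCA.
apply: is_instance_zimin_period; [exact: block_gap | | exact: IHj (ltnW lejn)].
move=> x; rewrite add1n ltnS => lex; apply: eq_indic.
by rewrite addnC; symmetry; apply: representable_shift.
Qed.

End SuperincreasingWeights.

Lemma nat_of_digits_max q (w : seq nat) :
  0 < q -> (nat_of_digits q (map (fun=> q - 1) w)).+1 = q ^ size w.
Proof.
move=> q_gt0; elim: w => [|x w IHw] //=.
by rewrite size_map expnS -addnS IHw addnC -mulSn subn1 prednK.
Qed.

Lemma pow2_pred_succ k : (2 ^ k - 1).+1 = 2 ^ k.
Proof. by rewrite subn1 prednK ?expn_gt0. Qed.

Fixpoint zimin_weight (q k j : nat) : nat :=
  if k is k'.+1 then
    if j == k then q ^ (2 ^ k' - 1) else zimin_weight q k' j * (q ^ 2 ^ k' + 1)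
  else 0.

Lemma nat_of_digits_zimin q k c :
  nat_of_digits q (map c (zimin k)) = weighted_sum k (zimin_weight q k) c.
Proof.
elim: k => [|k IHk]; first by rewrite /weighted_sum big_geq.
rewrite /= map_cat nat_of_digits_cat /= size_map size_zimin IHk pow2_pred_succ.
rewrite [RHS]/weighted_sum big_nat_recr //= eqxx.
have -> : \sum_(1 <= j < k.+1) c j * (if j == k.+1 then q ^ (2 ^ k - 1)
                                      else zimin_weight q k j * (q ^ 2 ^ k + 1)) =
          weighted_sum k (zimin_weight q k) c * (q ^ 2 ^ k + 1).
  rewrite /weighted_sum big_distrl; apply: eq_big_nat => j /andP[_ ltjk].
  by rewrite ifN ?mulnA // neq_ltn ltjk.
lia.
Qed.

Lemma tail_weight_zimin_weightS q k i : i <= k ->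
  tail_weight k.+1 (zimin_weight q k.+1) i =
  tail_weight k (zimin_weight q k) i * (q ^ 2 ^ k + 1) + q ^ (2 ^ k - 1).
Proof.
move=> leik; rewrite /tail_weight big_nat_recr //= eqxx big_distrl; congr (_ + _).
by apply: eq_big_nat => j /andP[_ ltjk]; rewrite ifN // neq_ltn ltjk.
Qed.

Lemma zimin_weight_gap q k j : 0 < q -> 1 <= j <= k ->
  (q - 1) * tail_weight k (zimin_weight q k) j < zimin_weight q k j.
Proof.
move=> q_gt0; elim: k j => [|k IHk] j /andP[j_gt0 lejk]; first by case: j j_gt0 lejk.
have [->|ltjk] := eqVneq j k.+1.
  by rewrite tail_weight_nn muln0 /= eqxx expn_gt0 q_gt0.
have lejk' : j <= k by rewrite -ltnS ltn_neqAle ltjk lejk.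
rewrite tail_weight_zimin_weightS //= ifN //.
have := IHk j; rewrite j_gt0 lejk' => /(_ isT).
rewrite -[q ^ 2 ^ k](congr1 (expn q) (pow2_pred_succ k)) expnS.
move: (tail_weight _ _ _) (zimin_weight q k j) (q ^ (2 ^ k - 1)) => r w a; nia.
Qed.

Lemma zimin_weight_block_gap q k j : 1 < q -> 1 < k -> 1 <= j <= k ->
  1 + (q - 1) * tail_weight k (zimin_weight q k) j < (q - 1) * zimin_weight q k j.
Proof.
case: q => [|p] // p_gt0; rewrite subSS subn0.
case: k => [|k] // lt1k /andP[j_gt0 lejk].
have le_a : p.+1 <= p.+1 ^ (2 ^ k - 1).
  rewrite -{1}(expn1 p.+1); apply: leq_pexp2l => //.
  have : 2 ^ 1 <= 2 ^ k by rewrite leq_exp2l.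
  lia.
have [->|ltjk] := eqVneq j k.+1.
  by rewrite tail_weight_nn muln0 /= eqxx; nia.
have lejk' : j <= k by rewrite -ltnS ltn_neqAle ltjk lejk.
rewrite tail_weight_zimin_weightS //= ifN //.
have := @zimin_weight_gap p.+1 k j isT; rewrite j_gt0 lejk' subSS subn0 => /(_ isT).
rewrite -[p.+1 ^ 2 ^ k](congr1 (expn p.+1) (pow2_pred_succ k)) expnS.
move: (tail_weight _ _ _) (zimin_weight _ _ _) (_ ^ (2 ^ k - 1)) le_a => r w a le_a ltw.
have : (p * r).+1 * (p.+1 * a + 1) <= w * (p.+1 * a + 1) by rewrite leq_mul2r ltw orbT.
have : w * (p.+1 * a + 1) <= p * (w * (p.+1 * a + 1)) by rewrite leq_pmull.
nia.
Qed.

Lemma tail_weight0_zimin_weight q k :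
  0 < q -> 1 + (q - 1) * tail_weight k (zimin_weight q k) 0 = q ^ (2 ^ k - 1).
Proof.
move=> q_gt0; rewrite -size_zimin -(@nat_of_digits_max q (zimin k) q_gt0).
by rewrite nat_of_digits_zimin /weighted_sum /tail_weight big_distrr add1n.
Qed.

Lemma truth_table_representable q n : 0 < q ->
  truth_table n q (2 ^ n - 1) =
  [seq indic (representable q n (zimin_weight q n) i) | i <- iota 0 (q ^ (2 ^ n - 1))].
Proof.
move=> q_gt0; rewrite /truth_table /lex_list -map_comp.
apply/eq_in_map => i; rewrite mem_iota add0n => /= lti; apply: eq_indic.
rewrite -[in lex_word _ _ i](size_zimin n) is_instance_lex_word ?size_zimin //.
by split=> -[c ltcq ->]; exists c; rewrite ?nat_of_digits_zimin.
Qed.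

Theorem theorem2 (q n : nat) (hq : 2 <= q) (hn : 1 < n) :
  let m := 2 ^ n - 1 in
  binary_word (truth_table n q m) /\
  is_instance (zimin n.+1) (truth_table n q m).
Proof.
move=> m; split.
  by apply/allP => _ /mapP[w _ ->]; apply: indic_lt2.
have q_gt0 : 0 < q by apply: ltnW.
have := @is_instance_zimin_representable q n (zimin_weight q n) q_gt0
  (fun k => @zimin_weight_gap q n k q_gt0) n
  (fun k => @zimin_weight_block_gap q n k hq hn) (leqnn n).
by rewrite subnn tail_weight0_zimin_weight // -truth_table_representable.
Qed.
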